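(* Let $G$ be a group of order $N$, let $d\geqslant 2$ be an integer, let $x\in G\setminus\{1\}$ and let $1\leqslant i\leqslant d-1$. The number of ordered pairs $(e,f)$ of $d$-edges of $\Gamma_x$ with $|e\cap f|=i$ is at most $2^{2d}\binom{d}{i}^2 i!\,N^{2d-i-2}$.
   Context: For a group $G$, an integer $d\geqslant 2$ and $x\in G\setminus\{1\}$, $\Gamma_x$ is the hypergraph with vertex set $G\setminus\{1\}$ whose edges are the subsets $E\subseteq G\setminus\{1\}$ for which there exist an integer $\ell$ with $|E|\leqslant\ell\leqslant d$, elements $h_1,\ldots,h_\ell\in E$ (not necessarily distinct) and signs $a_1,\ldots,a_\ell\in\{-1,1\}$ such that every element of $E$ appears at least once among $h_1,\ldots,h_\ell$ and $h_1^{a_1}\cdots h_\ell^{a_\ell}=x$. An edge $E$ with $|E|=k$ is called a $k$-edge. *)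

From mathcomp Require Import all_boot all_fingroup.
Set Implicit Arguments. Unset Strict Implicit. Unset Printing Implicit Defensive.

Local Open Scope group_scope.

(* E is an edge of Gamma_x (for the parameter d): E is a subset of G \ {1},
   and there are l with #|E| <= l <= d, elements h_0..h_{l-1} of E (covering E)
   and signs a_j (true = +1, false = -1) with h_0^{a_0} * ... * h_{l-1}^{a_{l-1}} = x. *)
Definition is_edge (gT : finGroupType) (d : nat) (x : gT) (E : {set gT}) : bool :=
  (1 \notin E) &&
  [exists l : 'I_d.+1,
     (#|E| <= l)%N &&
     [exists h : {ffun 'I_l -> gT}, exists a : {ffun 'I_l -> bool},
        [&& [forall j, h j \in E], E \subset codom h &
            (\prod_(j < l) (if a j then h j else (h j)^-1)) == x]]].

Definition dedge_pairs (gT : finGroupType) (d : nat) (x : gT) (i : nat)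
  : {set {set gT} * {set gT}} :=
  [set p : {set gT} * {set gT} |
     [&& is_edge d x p.1, is_edge d x p.2, #|p.1| == d, #|p.2| == d
       & #|p.1 :&: p.2| == i]].

From mathcomp Require Import all_boot all_fingroup zify ring.
Set Implicit Arguments. Unset Strict Implicit. Unset Printing Implicit Defensive.

(* Every d-edge E of Gamma_x is the set of letters of an injective word
   h_1^(a_1) ... h_d^(a_d) = x.  Such a word is determined by its signs and all
   its letters but one, the product pinning down the last: so there are at most
   2^d N^(d-1) d-edges.  Given E, a word sharing exactly i letters with E is
   determined by its signs, the i-set Q of positions whose letter lies in E,
   the injection Q -> E read off at these positions, and its letters at all but
   one position outside Q: at most 2^d C(d,i) d^_i N^(d-i-1) choices.  The bound
   follows from d^_i = C(d,i) i!. *)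

Lemma leq_card_fibers (T U : finType) (R : {set T * U}) (A : {set T}) n :
    (forall p, p \in R -> p.1 \in A) ->
    (forall t, t \in A -> #|[set u | (t, u) \in R]| <= n) ->
  #|R| <= #|A| * n.
Proof.
move=> RA fiberR; rewrite -sum1_card (partition_big fst (mem A)) //=.
rewrite -sum_nat_const; apply: leq_sum => t At.
rewrite sum1_card (leq_trans _ (fiberR t At)) //.
apply: leq_trans (leq_imset_card (pair t) _); apply: subset_leq_card.
apply/subsetP => -[t' u] /andP[Rp /eqP /= tt']; subst t'.
by apply/imsetP; exists u; rewrite ?inE.
Qed.

Section SignedProducts.
Variable gT : finGroupType.
Local Open Scope group_scope.

Lemma eq_factor_of_eq_prod (F G : nat -> gT) m n k : m <= k < n ->
    (forall j, m <= j < n -> j != k -> F j = G j) ->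
  \prod_(m <= j < n) F j = \prod_(m <= j < n) G j -> F k = G k.
Proof.
move=> /andP[mk kn] eqFG.
have splitk (H : nat -> gT) : \prod_(m <= j < n) H j =
    \prod_(m <= j < k) H j * (H k * \prod_(k.+1 <= j < n) H j).
  by rewrite (@big_cat_nat _ _ _ k m n) ?(ltnW kn) // (big_ltn (m := k)).
rewrite !splitk (eq_big_nat _ _ (F2 := G) (m := m) (n := k)); last first.
  by move=> j /andP[mj jk]; apply: eqFG; rewrite ?mj ?(ltn_trans jk) ?ltn_eqF.
rewrite (eq_big_nat _ _ (F2 := G) (m := k.+1) (n := n)); last first.
  move=> j /andP[kj jn]; apply: eqFG; rewrite ?gtn_eqF ?jn ?andbT //.
  exact: leq_trans mk (ltnW kj).
by move/mulgI/mulIg.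
Qed.

Definition signed_prod n (h : {ffun 'I_n -> gT}) (a : {ffun 'I_n -> bool}) :=
  \prod_(j < n) (if a j then h j else (h j)^-1).

Lemma signed_prod_inj_off n (k : 'I_n) (h g : {ffun 'I_n -> gT}) a :
    (forall j, j != k -> h j = g j) ->
  signed_prod h a = signed_prod g a -> h = g.
Proof.
move=> eq_hg; pose sgn (f : {ffun 'I_n -> gT}) j :=
  if a (insubd k j) then f (insubd k j) else (f (insubd k j))^-1.
have prodE f : signed_prod f a = \prod_(0 <= j < n) sgn f j.
  by rewrite big_mkord; apply: eq_bigr => j _; rewrite /sgn valKd.
rewrite !prodE => /(eq_factor_of_eq_prod (k := k)) eq_k.
have {eq_k} : sgn h k = sgn g k.
  apply: eq_k => [|j /andP[_ jn] jk]; first by rewrite ltn_ord.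
  by rewrite /sgn eq_hg // -val_eqE insubdK.
rewrite /sgn valKd => hk; apply/ffunP => j; have [->|/eq_hg //] := eqVneq j k.
by case: (a k) hk => // /invg_inj.
Qed.
End SignedProducts.

Section Restrict.
Variables (T : Type) (n m : nat) (j0 : 'I_n) (B : {set 'I_n}).

Definition restrict (h : 'I_n -> T) : {ffun 'I_m -> T} :=
  [ffun t : 'I_m => h (nth j0 (enum B) t)].

Lemma restrict_eq_index (h g : 'I_n -> T) : restrict h = restrict g ->
  forall j, j \in B -> index j (enum B) < m -> h j = g j.
Proof.
move=> /ffunP eq_hg j jB jm.
by have := eq_hg (Ordinal jm); rewrite !ffunE /= nth_index ?mem_enum.
Qed.

Lemma restrict_eq_in (h g : 'I_n -> T) :
  #|B| = m -> restrict h = restrict g -> {in B, h =1 g}.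
Proof.
move=> cardB /restrict_eq_index eq_hg j jB.
by apply: eq_hg; rewrite // -cardB cardE index_mem mem_enum.
Qed.

Lemma restrict_eq_but_last (h g : 'I_n -> T) :
    #|B| = m.+1 -> restrict h = restrict g ->
  {in B, forall j, j != nth j0 (enum B) m -> h j = g j}.
Proof.
move=> cardB /restrict_eq_index eq_hg j jB j_last; apply: eq_hg => //.
have: index j (enum B) < m.+1 by rewrite -cardB cardE index_mem mem_enum.
rewrite ltnS leq_eqVlt => /predU1P[jm|//].
by rewrite -jm nth_index ?mem_enum ?eqxx in j_last.
Qed.

Lemma injective_restrict (h : 'I_n -> T) :
  injective h -> m <= #|B| -> injective (restrict h).
Proof.
move=> inj_h mB t1 t2; rewrite !ffunE => /inj_h /eqP.
rewrite nth_uniq ?enum_uniq -?cardE ?(leq_trans (ltn_ord _) mB) //.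
by move/eqP/val_inj.
Qed.

End Restrict.

Section Spellings.
Variables (gT : finGroupType) (d : nat) (x : gT).

Definition spellings : {set {ffun 'I_d -> gT} * {ffun 'I_d -> bool}} :=
  [set w | signed_prod w.1 w.2 == x].

Lemma card_spellings : 0 < d -> #|spellings| <= 2 ^ d * #|gT| ^ (d - 1).
Proof.
move=> d_gt0; pose k := Ordinal d_gt0.
pose code (w : {ffun 'I_d -> gT} * {ffun 'I_d -> bool}) :=
  (w.2, restrict (d - 1) k [set~ k] w.1).
have code_inj : {in spellings &, injective code}.
  move=> [h a] [g b]; rewrite !inE /= => /eqP hx /eqP gx.
  case=> ab /restrict_eq_in eq_hg; subst b; congr (_, _).
  apply: (signed_prod_inj_off (k := k) (a := a)); last by rewrite hx gx.
  by move=> j jk; apply: eq_hg; rewrite ?cardsC1 ?card_ord ?subn1 // in_setC1.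
apply: leq_trans (leq_card_in _ _ code_inj) _.
by rewrite card_prod !card_ffun !card_ord card_bool.
Qed.

Definition letters (h : {ffun 'I_d -> gT}) := [set y in codom h].

Definition d_edges := [set E | is_edge d x E & #|E| == d].

Lemma d_edge_spelled E : E \in d_edges ->
  exists (h : {ffun 'I_d -> gT}) a,
    [/\ injective h, E = letters h & signed_prod h a = x].
Proof.
rewrite inE => /andP[/andP[_ /existsP[[l ld] /andP[/= El hw]]] /eqP card_E].
case/existsP: hw => h /existsP[a /and3P[/forallP hE Eh /eqP hx]].
have l_eq_d : l = d by apply/eqP; rewrite eqn_leq -ltnS ld -card_E.
subst l; exists h, a; split=> //.
  have: #|codom h| == #|'I_d|.
    by rewrite eqn_leq leq_image_card card_ord -{1}card_E subset_leq_card.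
  by move=> /image_injP inj_h j1 j2; apply: inj_h.
apply/setP => y; rewrite inE; apply/idP/idP => [/(subsetP Eh) //|/codomP[j ->]].
exact: hE.
Qed.

Lemma card_d_edges : 0 < d -> #|d_edges| <= 2 ^ d * #|gT| ^ (d - 1).
Proof.
move=> d_gt0.
have sub : d_edges \subset [set letters w.1 | w in spellings].
  apply/subsetP => E /d_edge_spelled[h [a [_ -> hx]]].
  by apply/imsetP; exists (h, a); rewrite ?inE ?hx.
apply: leq_trans (subset_leq_card sub) _.
exact: leq_trans (leq_imset_card _ _) (card_spellings d_gt0).
Qed.

Section Meeting.
Variables (E : {set gT}) (i : nat).
Hypothesis lt_id : i < d.

Definition meeting :=
  [set w in spellings | injectiveb w.1 & #|E :&: letters w.1| == i].

Definition hits (h : {ffun 'I_d -> gT}) := [set j | h j \in E].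

Lemma card_hits (h : {ffun 'I_d -> gT}) :
  injective h -> #|hits h| = #|E :&: letters h|.
Proof.
move=> inj_h; rewrite -(card_imset _ inj_h); apply: eq_card => y.
rewrite !inE; apply/imsetP/andP => [[j]|[yE /codomP[j yh]]].
  by rewrite inE => jE ->; split=> //; apply: codom_f.
by exists j; rewrite // inE -yh.
Qed.

Lemma card_meeting :
  #|meeting| <= 2 ^ d * 'C(d, i) * #|E| ^_ i * #|gT| ^ (d - i - 1).
Proof.
pose j0 : 'I_d := Ordinal (leq_ltn_trans (leq0n i) lt_id).
pose code (w : {ffun 'I_d -> gT} * {ffun 'I_d -> bool}) :=
  (w.2, (hits w.1, (restrict i j0 (hits w.1) w.1,
                    restrict (d - i - 1) j0 (~: hits w.1) w.1))).
pose S := setX [set: {ffun 'I_d -> bool}] (setX [set Q : {set 'I_d} | #|Q| == i]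
  (setX [set f : {ffun 'I_i -> gT} in ffun_on E | injectiveb f]
        [set: {ffun 'I_(d - i - 1) -> gT}])).
have card_hits_meeting w : w \in meeting -> #|hits w.1| = i.
  by case: w => h a; rewrite !inE => /and3P[_ /injectiveP/card_hits -> /eqP].
have code_inj : {in meeting &, injective code}.
  move=> [h a] [g b] hw gw; have cardQ := card_hits_meeting _ hw.
  move: hw gw; rewrite !inE /= => /and3P[/eqP hx _ _] /and3P[/eqP gx _ _].
  move=> [ab Q_hg eqQ eqC]; subst b; rewrite -Q_hg in eqQ eqC.
  have cardC : #|~: hits h| = (d - i - 1).+1.
    by move: (cardsC (hits h)); rewrite card_ord cardQ; lia.
  pose k := nth j0 (enum (~: hits h)) (d - i - 1).
  congr (_, _); apply: (signed_prod_inj_off (k := k) (a := a)) => [j j_last|].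
    have [jQ|jC] := boolP (j \in hits h).
      exact: (restrict_eq_in cardQ eqQ).
    by apply: (restrict_eq_but_last cardC eqC); rewrite // in_setC.
  by rewrite hx gx.
have code_S : code @: meeting \subset S.
  apply/subsetP => _ /imsetP[[h a] hw ->]; have cardQ := card_hits_meeting _ hw.
  move: hw; rewrite !inE /= cardQ eqxx => /and3P[_ /injectiveP inj_h _] /=.
  rewrite andbT; apply/andP; split.
    apply/forallP => t; rewrite ffunE.
    have: nth j0 (enum (hits h)) t \in hits h.
      by rewrite -mem_enum mem_nth // -cardE cardQ.
    by rewrite inE.
  by apply/injectiveP/injective_restrict; rewrite ?cardQ.
rewrite -(card_in_imset code_inj); apply: leq_trans (subset_leq_card code_S) _.
rewrite !cardsX !cardsT card_draws card_inj_ffuns_on !card_ffun !card_ord.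
by rewrite card_bool !mulnA.
Qed.

Lemma card_d_edges_meeting : #|[set F in d_edges | #|E :&: F| == i]| <=
  2 ^ d * 'C(d, i) * #|E| ^_ i * #|gT| ^ (d - i - 1).
Proof.
have sub : [set F in d_edges | #|E :&: F| == i] \subset
    [set letters w.1 | w in meeting].
  apply/subsetP => F; rewrite inE.
  case/andP=> /d_edge_spelled[h [a [inj_h eqF hx]]] EF.
  apply/imsetP; exists (h, a); rewrite // !inE hx -eqF EF andbT.
  by rewrite eqxx; apply/injectiveP.
apply: leq_trans (subset_leq_card sub) _.
exact: leq_trans (leq_imset_card _ _) card_meeting.
Qed.

End Meeting.
End Spellings.

Theorem lemma15 (gT : finGroupType) (d : nat) (x : gT) (i : nat) :
  (2 <= d)%N -> x != 1%g -> (1 <= i)%N -> (i <= d - 1)%N ->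
  (#|dedge_pairs d x i| <= 2 ^ (2 * d) * 'C(d, i) ^ 2 * i`! * #|gT| ^ (2 * d - i - 2))%N.
Proof.
move=> d_ge2 _ _ le_i_d1.
have d_gt0 : 0 < d by lia.
have lt_id : i < d by lia.
pose bound := 2 ^ d * 'C(d, i) * d ^_ i * #|gT| ^ (d - i - 1).
have pairs_le : #|dedge_pairs d x i| <= #|d_edges d x| * bound.
  apply: leq_card_fibers => [[E F]|E]; rewrite !inE /=.
    by case/and5P=> -> _ -> _ _.
  case/andP=> _ /eqP card_E; rewrite /bound.
  have -> : d ^_ i = #|E| ^_ i by rewrite card_E.
  apply: leq_trans _ (card_d_edges_meeting x E lt_id).
  apply/subset_leq_card/subsetP => F; rewrite !inE.
  by case/and5P=> _ -> _ -> ->.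
apply: leq_trans pairs_le _.
have -> : 2 * d - i - 2 = (d - 1) + (d - i - 1) by lia.
rewrite [leqRHS](_ : _ = 2 ^ d * #|gT| ^ (d - 1) * bound); last first.
  by rewrite /bound -bin_ffact mul2n -addnn !expnD; ring.
by rewrite leq_mul2r card_d_edges ?orbT.
Qed.
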